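(* Let $\phi:\mathbb R_{\ge0}\times X\to X$ be a continuous semiflow on a metric space $(X,d)$, let $K\subset X$ be compact and $\alpha\ge0$. Assume there is $L>0$ such that $d(\phi_t(x),\phi_t(y))\le L\,d(x,y)$ for all $x,y\in\bigcup_{s\ge0}\phi_s(K)$ and all $t\in[0,1]$. Then \[ h_{\mathrm{est}}(\alpha,K;\phi)=\ln(2)\cdot h_{\mathrm{est}}(\alpha,K;\phi_1). \]
   Context: For a continuous-time system $\phi$, a set $S\subset K$ is $(T,\varepsilon,\alpha,K)$-spanning ($T>0$ real) if for each $x\in K$ there is $y\in S$ with $d(\phi_t(x),\phi_t(y))<\varepsilon e^{-\alpha t}$ for all $t\in[0,T]$, and $h_{\mathrm{est}}(\alpha,K;\phi)=\lim_{\varepsilon\downarrow0}\limsup_{T\to\infty}\frac1T\ln s^*_{\mathrm{est}}(T,\varepsilon,\alpha,K;\phi)$, with $s^*_{\mathrm{est}}$ the minimal cardinality of such a set (natural logarithm). For the discrete-time system generated by the time-1 map $\phi_1$ (iterates $\phi_1^t=\phi_t$, $t\in\mathbb Z_{\ge0}$), the same definition is used with $T\in\mathbb Z_{>0}$, $t\in\{0,1,\ldots,T\}$, and $\log_2$ in place of $\ln$, giving $h_{\mathrm{est}}(\alpha,K;\phi_1)$. *)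

From Stdlib Require List.
From HB Require Import structures.
From mathcomp Require Import all_boot all_order all_algebra.
From mathcomp Require Import all_classical all_reals all_analysis.
Set Implicit Arguments. Unset Strict Implicit. Unset Printing Implicit Defensive.
Import Order.TTheory GRing.Theory Num.Theory.
Import numFieldNormedType.Exports.
Local Open Scope classical_set_scope.
Local Open Scope ring_scope.

Section Defs.
Variables (R : realType) (X : Type).

Definition is_metric (d : X -> X -> R) : Prop :=
  [/\ forall x y, 0 <= d x y,
      forall x y, d x y = 0 <-> x = y,
      forall x y, d x y = d y x &
      forall x y z, d x z <= d x y + d y z].

Definition d_open (d : X -> X -> R) (U : set X) : Prop :=
  forall x, U x -> exists2 e : R, 0 < e & forall y, d x y < e -> U y.

Definition d_compact (d : X -> X -> R) (K : set X) : Prop :=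
  forall (I : Type) (U : I -> set X),
    (forall i, d_open d (U i)) -> K `<=` \bigcup_i U i ->
    exists s : seq I, forall x, K x -> exists i, Stdlib.Lists.List.In i s /\ U i x.

(* continuous semiflow phi : R_{>=0} x X -> X (values for t < 0 irrelevant) *)
Definition cont_semiflow (d : X -> X -> R) (phi : R -> X -> X) : Prop :=
  [/\ forall x, phi 0 x = x,
      forall s t x, 0 <= s -> 0 <= t -> phi (s + t) x = phi s (phi t x) &
      forall t x, 0 <= t -> forall e : R, 0 < e ->
        exists2 del : R, 0 < del & forall s y, 0 <= s -> `|s - t| < del ->
          d x y < del -> d (phi t x) (phi s y) < e].

Definition spanning_ct (d : X -> X -> R) (phi : R -> X -> X)
    (T eps alpha : R) (K : set X) (S : seq X) : Prop :=
  (forall y, Stdlib.Lists.List.In y S -> K y) /\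
  forall x, K x -> exists2 y, Stdlib.Lists.List.In y S &
    forall t : R, 0 <= t <= T -> d (phi t x) (phi t y) < eps * expR (- (alpha * t)).

Definition spanning_dt (d : X -> X -> R) (f : X -> X)
    (T : nat) (eps alpha : R) (K : set X) (S : seq X) : Prop :=
  (forall y, Stdlib.Lists.List.In y S -> K y) /\
  forall x, K x -> exists2 y, Stdlib.Lists.List.In y S &
    forall t : nat, (t <= T)%N ->
      d (iter t f x) (iter t f y) < eps * expR (- (alpha * t%:R)).

Local Open Scope ereal_scope.

(* minimal cardinality (+oo if no finite spanning set exists) *)
Definition sest_ct d phi T eps alpha K : \bar R :=
  ereal_inf [set (size S)%:R%:E | S in spanning_ct d phi T eps alpha K].

Definition sest_dt d f T eps alpha K : \bar R :=
  ereal_inf [set (size S)%:R%:E | S in spanning_dt d f T eps alpha K].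

End Defs.

Section Logs.
Variable R : realType.
Local Open Scope ereal_scope.

Definition eln (x : \bar R) : \bar R :=
  match x with
  | EFin r => if r == 0%R then -oo else (ln r)%:E
  | +oo => +oo
  | -oo => -oo
  end.

Definition elog2 (x : \bar R) : \bar R := ((ln 2)^-1)%:E * eln x.
End Logs.

Local Open Scope ereal_scope.

Definition hest_ct (R : realType) (X : Type) (d : X -> X -> R) (phi : R -> X -> X)
    (alpha : R) (K : set X) : \bar R :=
  lim ((fun eps : R =>
          limf_esup (fun T : R => (T^-1)%:E * eln (sest_ct d phi T eps alpha K))
                    (pinfty_nbhs R)) @ 0%R^'+).

Definition hest_dt (R : realType) (X : Type) (d : X -> X -> R) (f : X -> X)
    (alpha : R) (K : set X) : \bar R :=
  lim ((fun eps : R =>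
          limn_esup (fun T : nat => (T%:R^-1)%:E * elog2 (sest_dt d f T eps alpha K)))
       @ 0%R^'+).

From HB Require Import structures.
From mathcomp Require Import all_boot all_order all_algebra.
From mathcomp Require Import all_classical all_reals all_analysis.
From mathcomp Require Import ring.
Import Order.TTheory GRing.Theory Num.Theory.
Import numFieldNormedType.Exports.
Set Implicit Arguments. Unset Strict Implicit.
Local Open Scope classical_set_scope.
Local Open Scope ring_scope.

(* Sampling the flow at integer times, a spanning set for phi up to time T is
   a spanning set for phi_1 up to time floor T.  Conversely, the Lipschitz bound
   on the forward orbit of K makes a spanning set for phi_1 up to time n, taken
   at a scale shrunk by a fixed factor, span phi up to time n + 1.  Hence the
   continuous and discrete growth rates agree up to rescaling eps, which does
   not matter in the limit eps -> 0 since both rates are monotone in eps; the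
   factor ln 2 only converts log_2 into ln. *)

Section ereal_complements.
Variable R : realType.
Local Open Scope ereal_scope.

Lemma le_limf_esup (T1 T2 : choiceType) (X1 : filteredType T1)
    (X2 : filteredType T2) (f : X1 -> \bar R) (g : X2 -> \bar R) F G :
  (forall W, G W -> exists2 V, F V & forall x, V x -> exists2 y, W y & f x <= g y) ->
  limf_esup f F <= limf_esup g G.
Proof.
move=> fg; apply: le_ereal_inf_tmp => _ [W GW <-].
have [V FV Vfg] := fg W GW.
apply: le_trans (ereal_inf_lbound _) _; first by exists V.
apply: ge_ereal_sup => _ [x Vx <-]; have [y Wy fxgy] := Vfg x Vx.
by apply: le_trans fxgy _; apply: ereal_sup_ubound; exists y.
Qed.

Lemma limf_esupZl (T : choiceType) (X : filteredType T) (f : X -> \bar R) F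
    (k : R) : (0 < k)%R ->
  limf_esup (fun x => k%:E * f x) F = k%:E * limf_esup f F.
Proof.
move=> k_gt0; rewrite /limf_esup -ereal_inf_pZl // image_comp.
congr ereal_inf; apply: eq_imagel => V _ /=.
by rewrite -ereal_sup_pZl // image_comp.
Qed.

Lemma le_ereal_sup_dominated (A B : set (\bar R)) :
  (forall x, A x -> exists2 y, B y & x <= y) -> ereal_sup A <= ereal_sup B.
Proof.
by move=> AB; apply: ge_ereal_sup => x /AB Bx; apply: le_ereal_sup_tmp.
Qed.

Lemma lim_nonincreasing_at_right (f : R -> \bar R) (a : R) :
  {in `]a, +oo[ &, nonincreasing_fun f} ->
  lim (f @ a^'+) = ereal_sup (f @` [set` `]a, +oo[]).
Proof.
move=> f_noninc; apply: (cvg_lim (@ereal_hausdorff R)).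
exact: nonincreasing_at_right_cvge.
Qed.

Lemma ereal_inf_natr_ge0 (T : Type) (P : set T) (f : T -> nat) :
  0 <= ereal_inf [set ((f x)%:R : R)%:E | x in P].
Proof. by apply: le_ereal_inf_tmp => _ [x _ <-]; rewrite lee_fin ler0n. Qed.

Lemma le_eln (x y : \bar R) : 0 <= x -> x <= y -> eln x <= eln y.
Proof.
case: x => [r||] //; case: y => [r'||] //=; rewrite ?lee_fin.
- move=> r_ge0 rr'; case: eqP => [_|/eqP r_neq0]; first by rewrite leNye.
  have r_gt0 : (0 < r)%R by rewrite lt0r r_neq0.
  by rewrite gt_eqF ?(lt_le_trans r_gt0) // lee_fin ler_ln // posrE (lt_le_trans r_gt0).
- by move=> _ _; case: eqP; rewrite leey.
Qed.

(* An infimum of naturals is either 0 or at least 1. *)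
Lemma eln_ereal_inf_natr (T : Type) (P : set T) (f : T -> nat) :
  let s := ereal_inf [set ((f x)%:R : R)%:E | x in P] in eln s = -oo \/ 0 <= eln s.
Proof.
move=> s; have [s_ge1|s_lt1] := leP 1 s.
  right; case: s s_ge1 => [r||] //= r_ge1; rewrite lee_fin in r_ge1.
  by rewrite gt_eqF ?(lt_le_trans ltr01) // lee_fin ln_ge0.
left; have [_ [x Px <-]] := ereal_inf_lt s_lt1.
rewrite lte_fin (_ : 1%R = 1%:R) // ltr_nat ltnS leqn0 => /eqP fx0.
suff -> : s = 0 by rewrite /= eqxx.
apply/eqP; rewrite eq_le ereal_inf_natr_ge0 andbT.
by apply: ereal_inf_lbound; exists x; rewrite ?fx0.
Qed.

Lemma lee_wpmul2r_Ny (x : \bar R) (p q : R) : x = -oo \/ 0 <= x ->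
  (0 < p)%R -> (p <= q)%R -> p%:E * x <= q%:E * x.
Proof.
case=> [->|x_ge0] p_gt0 pq; last exact: lee_wpmul2r.
by rewrite mulrNy gtr0_sg // mul1e leNye.
Qed.

End ereal_complements.

Section spanning_sets.
Variables (R : realType) (X : Type) (d : X -> X -> R) (K : set X) (alpha : R).

Lemma spanning_ct_le_eps (phi : R -> X -> X) T (e1 e2 : R) S : e1 <= e2 ->
  spanning_ct d phi T e1 alpha K S -> spanning_ct d phi T e2 alpha K S.
Proof.
move=> e12 [SK spanS]; split=> // x Kx; have [y Sy xy] := spanS x Kx.
by exists y => // t tT; apply: lt_le_trans (xy t tT) _; rewrite ler_wpM2r ?expR_ge0.
Qed.

Lemma spanning_dt_le_eps (f : X -> X) n (e1 e2 : R) S : e1 <= e2 ->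
  spanning_dt d f n e1 alpha K S -> spanning_dt d f n e2 alpha K S.
Proof.
move=> e12 [SK spanS]; split=> // x Kx; have [y Sy xy] := spanS x Kx.
by exists y => // t tn; apply: lt_le_trans (xy t tn) _; rewrite ler_wpM2r ?expR_ge0.
Qed.

Variable phi : R -> X -> X.
Hypothesis phi0 : forall x, phi 0 x = x.
Hypothesis phiD : forall s t x, 0 <= s -> 0 <= t -> phi (s + t) x = phi s (phi t x).

Lemma iter_time1 n x : iter n (phi 1) x = phi n%:R x.
Proof.
elim: n => [|n IHn] /=; first by rewrite phi0.
by rewrite IHn -phiD ?ler0n // -natr1 addrC.
Qed.

Lemma spanning_ct_dt T e n S : n%:R <= T ->
  spanning_ct d phi T e alpha K S -> spanning_dt d (phi 1) n e alpha K S.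
Proof.
move=> nT [SK spanS]; split=> // x Kx; have [y Sy xy] := spanS x Kx.
exists y => // t tn; rewrite !iter_time1; apply: xy.
by rewrite ler0n (le_trans _ nT) // ler_nat.
Qed.

Variable L : R.
Hypothesis L_gt0 : 0 < L.
Hypothesis phi_lipschitz : forall x y,
  (\bigcup_(s in [set s : R | 0 <= s]) (phi s @` K)) x ->
  (\bigcup_(s in [set s : R | 0 <= s]) (phi s @` K)) y ->
  forall t : R, 0 <= t <= 1 -> d (phi t x) (phi t y) <= L * d x y.
Hypothesis alpha_ge0 : 0 <= alpha.

(* Between two integer times the flow spreads distances by at most L and the
   exponential weight drops by at most expR alpha; shrinking eps by the factor
   expR (- alpha) / L absorbs both. *)
Lemma spanning_dt_ct T e n S : 0 < e -> T < n.+1%:R ->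
  spanning_dt d (phi 1) n (expR (- alpha) / L * e) alpha K S ->
  spanning_ct d phi T e alpha K S.
Proof.
move=> e_gt0 Tn [SK spanS]; split=> // x Kx; have [y Sy xy] := spanS x Kx.
exists y => // t /andP[t_ge0 tT].
set k := Num.truncn t; have /andP[kt tk] := truncn_itv t_ge0.
have kn : (k <= n)%N by rewrite truncn_le_nat (le_lt_trans tT Tn).
have frac_ge0 : 0 <= t - k%:R by rewrite subr_ge0.
have frac_le1 : 0 <= t - k%:R <= 1 by rewrite frac_ge0 lerBlDr addrC natr1 ltW.
have orbitK z : K z ->
    (\bigcup_(s in [set s : R | 0 <= s]) (phi s @` K)) (phi k%:R z).
  by move=> Kz; exists k%:R; [rewrite /= ler0n | exists z].
have at_k := xy k kn; rewrite !iter_time1 in at_k.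
rewrite -(subrK k%:R t) !(phiD _ frac_ge0 (ler0n _ k)).
apply: le_lt_trans (phi_lipschitz (orbitK _ Kx) (orbitK _ (SK _ Sy)) frac_le1) _.
move: at_k; rewrite -(ltr_pM2l L_gt0) => /lt_le_trans; apply.
have -> : L * (expR (- alpha) / L * e * expR (- (alpha * k%:R))) =
    e * expR (- (alpha * (k%:R + 1))).
  by rewrite mulrDr mulr1 opprD expRD; field; rewrite gt_eqF.
by rewrite subrK ler_pM2l // ler_expR lerN2 ler_wpM2l // natr1 ltW.
Qed.

End spanning_sets.

Section growth_rates.
Variables (R : realType) (X : Type) (d : X -> X -> R) (K : set X) (alpha : R).
Local Open Scope ereal_scope.

Definition ct_growth (phi : R -> X -> X) (e : R) : \bar R :=
  limf_esup (fun T : R => (T^-1)%:E * eln (sest_ct d phi T e alpha K))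
    (pinfty_nbhs R).

Definition dt_growth (f : X -> X) (e : R) : \bar R :=
  limn_esup (fun n : nat => (n%:R^-1)%:E * eln (sest_dt d f n e alpha K)).

Lemma ct_growth_nonincreasing phi :
  {in `]0%R, +oo[ &, nonincreasing_fun (ct_growth phi)}.
Proof.
move=> e1 e2 _ _ e12; apply: le_limf_esup => W [M [Mr MW]].
exists [set T : R | `|M| < T]%R; first by exists `|M|%R; rewrite realE normr_ge0.
move=> T /= MT; exists T; first exact/MW/(le_lt_trans (real_ler_norm Mr)).
apply: lee_wpmul2l; first by rewrite lee_fin invr_ge0 ltW // (le_lt_trans _ MT).
apply: le_eln; first exact: ereal_inf_natr_ge0.
apply: ereal_inf_le_tmp => _ [S spanS <-]; exists S => //.
exact: spanning_ct_le_eps e12 spanS.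
Qed.

Lemma dt_growth_nonincreasing f :
  {in `]0%R, +oo[ &, nonincreasing_fun (dt_growth f)}.
Proof.
move=> e1 e2 _ _ e12; apply: le_limf_esup => W FW; exists W => // n Wn.
exists n => //; apply: lee_wpmul2l; first by rewrite lee_fin invr_ge0 ler0n.
apply: le_eln; first exact: ereal_inf_natr_ge0.
apply: ereal_inf_le_tmp => _ [S spanS <-]; exists S => //.
exact: spanning_dt_le_eps e12 spanS.
Qed.

Lemma hest_ct_ereal_sup phi :
  hest_ct d phi alpha K = ereal_sup (ct_growth phi @` [set` `]0%R, +oo[]).
Proof. exact/lim_nonincreasing_at_right/ct_growth_nonincreasing. Qed.

Lemma hest_dt_ereal_sup f :
  (ln 2)%:E * hest_dt d f alpha K = ereal_sup (dt_growth f @` [set` `]0%R, +oo[]).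
Proof.
have ln2_gt0 : (0 < ln (2 : R))%R by rewrite ln_gt0 // ltr1n.
have dtE : (fun e : R => limn_esup (fun n : nat =>
      (n%:R^-1)%:E * elog2 (sest_dt d f n e alpha K))) =
    (fun e => ((ln 2)^-1)%:E * dt_growth f e).
  apply/funext => e; rewrite /dt_growth -limf_esupZl ?invr_gt0 //.
  by congr limf_esup; apply/funext => n; rewrite /elog2 muleCA.
rewrite /hest_dt dtE lim_nonincreasing_at_right; last first.
  move=> e1 e2 e1_gt0 e2_gt0 e12.
  apply: lee_wpmul2l; first by rewrite lee_fin invr_ge0 ltW.
  exact: dt_growth_nonincreasing.
rewrite -[X in ereal_sup X](image_comp (dt_growth f)) ereal_sup_pZl ?invr_gt0 //.
by rewrite muleA -EFinM mulfV ?gt_eqF // mul1e.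
Qed.

Variable phi : R -> X -> X.
Hypothesis phi0 : forall x, phi 0 x = x.
Hypothesis phiD : forall s t x, (0 <= s)%R -> (0 <= t)%R ->
  phi (s + t) x = phi s (phi t x).

Lemma dt_growth_le_ct_growth e : dt_growth (phi 1) e <= ct_growth phi e.
Proof.
apply: le_limf_esup => W [M [Mr MW]].
exists [set n | ((Num.truncn M).+1 <= n)%N]; first by exists (Num.truncn M).+1.
move=> n /= Mn; exists n%:R.
  by apply: MW; apply: lt_le_trans (real_truncnS_gt Mr) _; rewrite ler_nat.
apply: lee_wpmul2l; first by rewrite lee_fin invr_ge0 ler0n.
apply: le_eln; first exact: ereal_inf_natr_ge0.
apply: ereal_inf_le_tmp => _ [S spanS <-]; exists S => //.
exact: (spanning_ct_dt phi0 phiD (lexx _) spanS).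
Qed.

Variable L : R.
Hypothesis L_gt0 : (0 < L)%R.
Hypothesis phi_lipschitz : forall x y,
  (\bigcup_(s in [set s : R | (0 <= s)%R]) (phi s @` K)) x ->
  (\bigcup_(s in [set s : R | (0 <= s)%R]) (phi s @` K)) y ->
  forall t : R, (0 <= t <= 1)%R -> (d (phi t x) (phi t y) <= L * d x y)%R.
Hypothesis alpha_ge0 : (0 <= alpha)%R.

Lemma ct_growth_le_dt_growth e : (0 < e)%R ->
  ct_growth phi e <= dt_growth (phi 1) (expR (- alpha) / L * e).
Proof.
move=> e_gt0; apply: le_limf_esup => W [N _ NW].
exists [set T : R | N%:R + 1 < T]%R.
  by exists (N%:R + 1)%R; split => //; rewrite realE addr_ge0 ?ler0n.
move=> T /= NT; have T_ge0 : (0 <= T)%R.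
  by apply: le_trans (ltW NT); rewrite addr_ge0 ?ler0n.
have /andP[nT Tn] := truncn_itv T_ge0; set n := Num.truncn T in nT Tn.
have n_ge1 : (1 <= n)%N.
  by rewrite truncn_ge_nat // (le_trans _ (ltW NT)) // lerDr ler0n.
have T_gt0 : (0 < T)%R by apply: lt_le_trans nT; rewrite ltr0n.
exists n; first by apply: NW; rewrite /= truncn_ge_nat // (le_trans _ (ltW NT)) ?lerDl.
set s := sest_dt d (phi 1) n _ alpha K.
apply: (@le_trans _ _ ((T^-1)%:E * eln s)).
  apply: lee_wpmul2l; first by rewrite lee_fin invr_ge0.
  apply: le_eln; first exact: ereal_inf_natr_ge0.
  apply: ereal_inf_le_tmp => _ [S spanS <-]; exists S => //.
  exact: (spanning_dt_ct phi0 phiD L_gt0 phi_lipschitz alpha_ge0 e_gt0 Tn spanS).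
apply: lee_wpmul2r_Ny; first exact: eln_ereal_inf_natr.
  by rewrite invr_gt0.
by rewrite lef_pV2 // posrE ltr0n.
Qed.

End growth_rates.

Theorem mainTheorem3 (R : realType) (X : Type) (d : X -> X -> R)
    (phi : R -> X -> X) (K : set X) (alpha : R) :
  is_metric d -> cont_semiflow d phi -> d_compact d K -> 0 <= alpha ->
  (exists2 L : R, 0 < L &
     forall x y, (\bigcup_(s in [set s : R | 0 <= s]) (phi s @` K)) x ->
                 (\bigcup_(s in [set s : R | 0 <= s]) (phi s @` K)) y ->
       forall t : R, 0 <= t <= 1 -> d (phi t x) (phi t y) <= L * d x y) ->
  hest_ct d phi alpha K = ((ln (2 : R))%:E * hest_dt d (phi 1%R) alpha K)%E.
Proof.
move=> _ [phi0 phiD _] _ alpha_ge0 [L L_gt0 phi_lipschitz].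
rewrite hest_ct_ereal_sup hest_dt_ereal_sup.
have posE e : [set` `]0%R, +oo[] e = (0 < e) by rewrite /= in_itv /= andbT.
apply/eqP; rewrite eq_le; apply/andP; split; apply: le_ereal_sup_dominated.
- move=> _ [e e_pos <-]; rewrite posE in e_pos.
  exists (dt_growth d K alpha (phi 1) (expR (- alpha) / L * e)).
    by exists (expR (- alpha) / L * e); rewrite // posE !mulr_gt0 ?invr_gt0 ?expR_gt0.
  exact: ct_growth_le_dt_growth.
- move=> _ [e e_pos <-]; exists (ct_growth d K alpha phi e); first by exists e.
  exact: dt_growth_le_ct_growth.
Qed.
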